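(* Let $A$ be an $n\times m$ Boolean matrix and $B$ an $m\times n$ Boolean matrix, and suppose neither $A$ nor $B$ has a zero line (zero row or zero column). If $AB$ and $BA$ are both primitive, then $$|k(AB)-k(BA)|\leq 1.$$
   Context: All matrices are Boolean $(0,1)$-matrices, and products are computed in Boolean arithmetic ($1+1=1$, $0+0=0$, $1+0=1$). A square nonnegative (Boolean) matrix $C$ is primitive if $C^r$ has all entries positive for some positive integer $r$. For a primitive matrix $C$, its scrambling index $k(C)$ is the smallest positive integer $k$ such that any two rows of $C^k$ have a positive entry in a common position; equivalently, the smallest positive integer $k$ with $C^k(C^t)^k=J$, where $C^t$ is the transpose and $J$ is the all-ones matrix. *)

From mathcomp Require Import all_boot all_algebra.
Set Implicit Arguments. Unset Strict Implicit. Unset Printing Implicit Defensive.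

(* Boolean (0,1)-matrices, represented as matrices with entries in bool
   (true = 1, false = 0), with Boolean arithmetic (1+1=1). *)

Definition bmul (n m p : nat) (A : 'M[bool]_(n, m)) (B : 'M[bool]_(m, p))
  : 'M[bool]_(n, p) :=
  \matrix_(i, j) [exists k : 'I_m, A i k && B k j].

Definition bid (n : nat) : 'M[bool]_n := \matrix_(i, j) (i == j).

Fixpoint bpow (n : nat) (C : 'M[bool]_n) (k : nat) : 'M[bool]_n :=
  match k with
  | 0 => bid n
  | k'.+1 => bmul C (bpow C k')
  end.

Definition is_J (n m : nat) (M : 'M[bool]_(n, m)) : Prop :=
  forall i j, M i j = true.

Definition no_zero_line (n m : nat) (A : 'M[bool]_(n, m)) : Prop :=
  (forall i : 'I_n, exists j : 'I_m, A i j = true) /\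
  (forall j : 'I_m, exists i : 'I_n, A i j = true).

Definition primitive (n : nat) (C : 'M[bool]_n) : Prop :=
  exists r, 0 < r /\ is_J (bpow C r).

Definition scrambles (n : nat) (C : 'M[bool]_n) (k : nat) : Prop :=
  is_J (bmul (bpow C k) (bpow C^T k)).

Definition scrambling_index (n : nat) (C : 'M[bool]_n) (k : nat) : Prop :=
  0 < k /\ scrambles C k /\ (forall j, 0 < j < k -> ~ scrambles C j).

From mathcomp Require Import all_boot all_algebra.

Set Implicit Arguments.
Unset Strict Implicit.
Unset Printing Implicit Defensive.

(* Since (AB)^(k+1) = A (BA)^k B, a common column l of rows a, a' of (BA)^k
   yields a common column of rows i, j of (AB)^(k+1): choose a, a' with
   A i a = A j a' = 1 and any b with B l b = 1. *)

Lemma bmulE (n m p : nat) (A : 'M[bool]_(n, m)) (B : 'M[bool]_(m, p)) i j :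
  bmul A B i j = [exists k, A i k && B k j].
Proof. by rewrite mxE. Qed.

Lemma bmulA (n m p q : nat) (A : 'M[bool]_(n, m)) (B : 'M[bool]_(m, p))
  (C : 'M[bool]_(p, q)) : bmul A (bmul B C) = bmul (bmul A B) C.
Proof.
apply/matrixP=> i j; rewrite !bmulE; apply/existsP/existsP.
- move=> [k /andP[Aik]]; rewrite bmulE => /existsP[l /andP[Bkl Clj]].
  by exists l; rewrite Clj andbT bmulE; apply/existsP; exists k; rewrite Aik.
- move=> [l /andP[]]; rewrite bmulE => /existsP[k /andP[Aik Bkl]] Clj.
  by exists k; rewrite Aik bmulE; apply/existsP; exists l; rewrite Bkl.
Qed.

Lemma bmul1 (n m : nat) (A : 'M[bool]_(n, m)) : bmul (bid n) A = A.
Proof.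
apply/matrixP=> i j; rewrite bmulE; apply/existsP/idP.
- by move=> [k]; rewrite mxE => /andP[/eqP ->].
- by move=> Aij; exists i; rewrite mxE eqxx.
Qed.

Lemma bmul1r (n m : nat) (A : 'M[bool]_(n, m)) : bmul A (bid m) = A.
Proof.
apply/matrixP=> i j; rewrite bmulE; apply/existsP/idP.
- by move=> [k]; rewrite mxE => /andP[Aik /eqP <-].
- by move=> Aij; exists j; rewrite mxE eqxx andbT.
Qed.

Lemma trmx_bmul (n m p : nat) (A : 'M[bool]_(n, m)) (B : 'M[bool]_(m, p)) :
  trmx (bmul A B) = bmul (trmx B) (trmx A).
Proof.
apply/matrixP=> i j; rewrite mxE !bmulE; apply/existsP/existsP;
  by move=> [k /andP[Hl Hr]]; exists k; rewrite ?mxE in Hl Hr *; rewrite Hl Hr.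
Qed.

Lemma bpowSr (n : nat) (C : 'M[bool]_n) k : bpow C k.+1 = bmul (bpow C k) C.
Proof.
elim: k => [|k IHk] /=; first by rewrite bmul1 bmul1r.
by rewrite -bmulA -IHk.
Qed.

Lemma bpow_trmx (n : nat) (C : 'M[bool]_n) k : bpow (trmx C) k = trmx (bpow C k).
Proof.
elim: k => [|k IHk] /=; first by apply/matrixP=> i j; rewrite !mxE eq_sym.
by rewrite IHk -trmx_bmul -bpowSr.
Qed.

Lemma bpowS_bmul (n m : nat) (A : 'M[bool]_(n, m)) (B : 'M[bool]_(m, n)) k :
  bpow (bmul A B) k.+1 = bmul A (bmul (bpow (bmul B A) k) B).
Proof.
elim: k => [|k IHk]; first by rewrite /= bmul1r bmul1.
change (bpow (bmul A B) k.+2) with (bmul (bmul A B) (bpow (bmul A B) k.+1)).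
by rewrite IHk [bpow _ k.+1]/= -!bmulA.
Qed.

Lemma scramblesP (n : nat) (C : 'M[bool]_n) k :
  scrambles C k <-> forall i j, exists l, bpow C k i l && bpow C k j l.
Proof.
rewrite /scrambles bpow_trmx; split=> [sC i j | rows i j].
- by move: (sC i j); rewrite bmulE => /existsP[l]; rewrite mxE; exists l.
- by have [l Cl] := rows i j; rewrite bmulE; apply/existsP; exists l; rewrite mxE.
Qed.

Definition no_zero_row (n m : nat) (A : 'M[bool]_(n, m)) : Prop :=
  forall i, exists j, A i j.

Lemma scrambles_bmulS (n m : nat) (A : 'M[bool]_(n, m)) (B : 'M[bool]_(m, n)) k :
  no_zero_row A -> no_zero_row B ->
  scrambles (bmul B A) k -> scrambles (bmul A B) k.+1.
Proof.
move=> rowA rowB /scramblesP sBA; apply/scramblesP=> i j.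
have [a Aia] := rowA i; have [a' Aja'] := rowA j.
have [l /andP[Pal Pa'l]] := sBA a a'; have [b Blb] := rowB l.
have row_reaches_b r c : A r c -> bpow (bmul B A) k c l ->
    bpow (bmul A B) k.+1 r b.
  move=> Arc Pcl; rewrite bpowS_bmul bmulE; apply/existsP; exists c.
  by rewrite Arc bmulE; apply/existsP; exists l; rewrite Pcl.
by exists b; rewrite (row_reaches_b i a) ?(row_reaches_b j a').
Qed.

Lemma scrambling_index_bmul_le (n m : nat)
  (A : 'M[bool]_(n, m)) (B : 'M[bool]_(m, n)) kAB kBA :
  no_zero_row A -> no_zero_row B ->
  scrambling_index (bmul A B) kAB -> scrambling_index (bmul B A) kBA ->
  kAB <= kBA.+1.
Proof.
move=> rowA rowB [_ [_ minAB]] [_ [sBA _]].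
rewrite leqNgt; apply/negP=> lt_kAB.
exact: (minAB kBA.+1) (scrambles_bmulS rowA rowB sBA).
Qed.

Theorem lemma2p1 (n m : nat) (A : 'M[bool]_(n, m)) (B : 'M[bool]_(m, n))
  (kAB kBA : nat) :
  no_zero_line A -> no_zero_line B ->
  primitive (bmul A B) -> primitive (bmul B A) ->
  scrambling_index (bmul A B) kAB -> scrambling_index (bmul B A) kBA ->
  kAB <= kBA.+1 /\ kBA <= kAB.+1.
Proof.
move=> [rowA _] [rowB _] _ _ iAB iBA; split.
- exact: scrambling_index_bmul_le rowA rowB iAB iBA.
- exact: scrambling_index_bmul_le rowB rowA iBA iAB.
Qed.
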